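(* (Weak Substitution Lemma) Let $\phi$ be a formula of $\mathscr{L}_{\max}$, $x$ a variable, $s$ an assignment of variables to naturals, and $c$ a constant symbol. For every $f:\mathbb{N}\to\mathbb{N}$, $\mathscr{M}_f\models\phi[s(x|c^{s})]$ if and only if $\mathscr{M}_f\models\phi(x|c)[s]$, where $s(x|c^s)$ is the assignment agreeing with $s$ except that it sends $x$ to the interpretation of $c$ in $\mathscr{M}_f$, and $\phi(x|c)$ is the result of substituting $c$ for the free occurrences of $x$ in $\phi$.
   Context: $\mathbb{N}^{<\mathbb{N}}$ denotes the set of finite sequences of naturals. The language $\mathscr{L}_{\max}$ is a first-order language extended with ellipses. Its symbols: a constant symbol $\mathbf{n}$ (also written $\bar n$) for each $n\in\mathbb{N}$; an $n$-ary function symbol $\tilde w$ for each $w:\mathbb{N}^n\to\mathbb{N}$ ($n>0$); an $n$-ary predicate symbol $\tilde p$ for each $p\subseteq\mathbb{N}^n$ ($n>0$); an ''$\mathbb{N}^{<\mathbb{N}}$-ary'' function symbol $\tilde G$ for each $G:\mathbb{N}^{<\mathbb{N}}\to\mathbb{N}$; one extra unary function symbol $\mathbf{f}$; and, for each variable $x$, a logical symbol $\cdots_x$. Terms and their free variables: a variable $x$ (free variables $\{x\}$); a constant (no free variables); $h(t_1,\ldots,t_n)$ for $h$ an $n$-ary or $\mathbb{N}^{<\mathbb{N}}$-ary function symbol and terms $t_i$ (free variables the union); and, for an $\mathbb{N}^{<\mathbb{N}}$-ary $G$, terms $u,v$ and a variable $x$, the term $G(u(\mathbf{0}),\cdots_x,u(v))$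 with free variables $(FV(u)\setminus\{x\})\cup FV(v)$. Formulas are built from these terms as usual. Substitution is defined by the usual induction with two new cases: for $y\neq x$, $G(u(\mathbf{0}),\cdots_x,u(v))(y|t)=G(u(y|t)(\mathbf{0}),\cdots_x,u(y|t)(v(y|t)))$, and $G(u(\mathbf{0}),\cdots_x,u(v))(x|t)=G(u(\mathbf{0}),\cdots_x,u(v(x|t)))$. For $f:\mathbb{N}\to\mathbb{N}$, $\mathscr{M}_f$ is the structure with universe $\mathbb{N}$ interpreting $\mathbf{n}$ as $n$, $\tilde w$ as $w$, $\tilde p$ as $p$, $\tilde G$ as $G$, and $\mathbf{f}$ as $f$. Under an assignment $s$, terms are evaluated by the usual induction plus the clause $G(u(\mathbf{0}),\cdots_x,u(v))^{s}=G\big(u(x|\mathbf{0})^{s},\ldots,u(x|\overline{v^{s}})^{s}\big)$; satisfaction is then defined as usual. *)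

From Stdlib Require Import Arith List Fin.
Import ListNotations.

Definition var := nat.

(* Terms of L_max.  An n-ary symbol (n > 0) is rendered with arity [S n];
   the symbol itself is the function it denotes (w, p, G). *)
Inductive term : Type :=
| tvar   (x : var)
| tconst (n : nat)
| tfun   (n : nat) (w : (Fin.t (S n) -> nat) -> nat)
         (args : Fin.t (S n) -> term)
| tG     (G : list nat -> nat) (n : nat)
         (args : Fin.t (S n) -> term)
| tf     (t : term)
| tell   (G : list nat -> nat) (x : var) (u v : term).          (* G(u(0),..._x,u(v)) *)

Inductive formula : Type :=
| feq   (t1 t2 : term)
| fpred (n : nat) (p : (Fin.t (S n) -> nat) -> Prop) (args : Fin.t (S n) -> term)
| fnot  (A : formula)
| fimp  (A B : formula)
| fand  (A B : formula)
| for_  (A B : formula)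
| fall  (y : var) (A : formula)
| fex   (y : var) (A : formula).

Fixpoint subst_term (t : term) (y : var) (r : term) : term :=
  match t with
  | tvar z => if Nat.eqb z y then r else tvar z
  | tconst n => tconst n
  | tfun n w args => tfun n w (fun i => subst_term (args i) y r)
  | tG G n args => tG G n (fun i => subst_term (args i) y r)
  | tf t1 => tf (subst_term t1 y r)
  | tell G x u v =>
      if Nat.eqb x y then tell G x u (subst_term v y r)
      else tell G x (subst_term u y r) (subst_term v y r)
  end.

Fixpoint subst_form (A : formula) (y : var) (r : term) : formula :=
  match A with
  | feq t1 t2 => feq (subst_term t1 y r) (subst_term t2 y r)
  | fpred n p args => fpred n p (fun i => subst_term (args i) y r)
  | fnot B => fnot (subst_form B y r)
  | fimp B C => fimp (subst_form B y r) (subst_form C y r)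
  | fand B C => fand (subst_form B y r) (subst_form C y r)
  | for_ B C => for_ (subst_form B y r) (subst_form C y r)
  | fall z B => if Nat.eqb z y then fall z B else fall z (subst_form B y r)
  | fex z B => if Nat.eqb z y then fex z B else fex z (subst_form B y r)
  end.

Fixpoint fin_max (n : nat) : (Fin.t n -> nat) -> nat :=
  match n with
  | 0 => fun _ => 0
  | S m => fun g => Nat.max (g Fin.F1) (fin_max m (fun i => g (Fin.FS i)))
  end.

Fixpoint fin_list (n : nat) : (Fin.t n -> nat) -> list nat :=
  match n with
  | 0 => fun _ => []
  | S m => fun g => g Fin.F1 :: fin_list m (fun i => g (Fin.FS i))
  end.

(* Depth of a term (used as fuel for evaluation; substituting a constant
   for a variable does not change depth). *)
Fixpoint depth (t : term) : nat :=
  match t with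
  | tvar _ | tconst _ => 0
  | tfun n _ args => S (fin_max (S n) (fun i => depth (args i)))
  | tG _ n args => S (fin_max (S n) (fun i => depth (args i)))
  | tf t1 => S (depth t1)
  | tell _ _ u v => S (Nat.max (depth u) (depth v))
  end.

Definition assignment := var -> nat.

Definition upd (s : assignment) (x : var) (a : nat) : assignment :=
  fun y => if Nat.eqb y x then a else s y.

(* Evaluation in M_f with fuel k; the ellipsis clause evaluates the
   syntactically substituted terms u(x|bar i), i = 0..v^s, as in the paper. *)
Fixpoint evalk (f : nat -> nat) (k : nat) (s : assignment) (t : term) {struct k} : nat :=
  match t with
  | tvar x => s x
  | tconst n => n
  | _ =>
    match k with
    | 0 => 0
    | S k' =>
      match t with
      | tfun n w args => w (fun i => evalk f k' s (args i))
      | tG G n args => G (fin_list (S n) (fun i => evalk f k' s (args i)))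
      | tf t1 => f (evalk f k' s t1)
      | tell G x u v =>
          G (map (fun i => evalk f k' s (subst_term u x (tconst i)))
                 (seq 0 (S (evalk f k' s v))))
      | _ => 0
      end
    end
  end.

Definition eval (f : nat -> nat) (s : assignment) (t : term) : nat :=
  evalk f (depth t) s t.

Fixpoint sat (f : nat -> nat) (s : assignment) (A : formula) : Prop :=
  match A with
  | feq t1 t2 => eval f s t1 = eval f s t2
  | fpred n p args => p (fun i => eval f s (args i))
  | fnot B => ~ sat f s B
  | fimp B C => sat f s B -> sat f s C
  | fand B C => sat f s B /\ sat f s C
  | for_ B C => sat f s B \/ sat f s C
  | fall y B => forall a : nat, sat f (upd s y a) B
  | fex y B => exists a : nat, sat f (upd s y a) B
  end.

(* Induction on the fuel of [evalk] shows that evaluating a term under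
   [s(x|c)] equals evaluating its instance at the numeral [c] under [s];
   the ellipsis clause needs that substitutions of numerals for the same
   variable absorb each other and for distinct variables commute.  Since
   such a substitution preserves depth, the fuel used by [eval] matches.
   The formula case is then a routine induction, quantifiers on [x]
   being handled by shadowing of assignment updates. *)
From Stdlib Require Import Arith List FunctionalExtensionality.

Lemma subst_term_const_absorb (u : term) (x : var) (a b : nat) :
  subst_term (subst_term u x (tconst a)) x (tconst b) = subst_term u x (tconst a).
Proof.
  induction u as [z| | n w args IH | G n args IH | t IH | G z u IHu v IHv]; simpl.
  - destruct (Nat.eqb_spec z x); simpl; [reflexivity |].
    destruct (Nat.eqb_spec z x); congruence.
  - reflexivity.
  - f_equal; apply functional_extensionality; intro i; apply IH.
  - f_equal; apply functional_extensionality; intro i; apply IH.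
  - f_equal; apply IH.
  - destruct (Nat.eqb_spec z x); simpl; destruct (Nat.eqb_spec z x);
      try congruence; rewrite ?IHu, ?IHv; reflexivity.
Qed.

Lemma subst_term_const_comm (u : term) (x y : var) (a b : nat) : x <> y ->
  subst_term (subst_term u x (tconst a)) y (tconst b) =
  subst_term (subst_term u y (tconst b)) x (tconst a).
Proof.
  intro Hxy.
  induction u as [z| | n w args IH | G n args IH | t IH | G z u IHu v IHv]; simpl.
  - destruct (Nat.eqb_spec z x), (Nat.eqb_spec z y); simpl;
      destruct (Nat.eqb_spec z x), (Nat.eqb_spec z y); congruence.
  - reflexivity.
  - f_equal; apply functional_extensionality; intro i; apply IH.
  - f_equal; apply functional_extensionality; intro i; apply IH.
  - f_equal; apply IH.
  - destruct (Nat.eqb_spec z x), (Nat.eqb_spec z y); simpl;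
      destruct (Nat.eqb_spec z x), (Nat.eqb_spec z y); try congruence;
      rewrite ?IHu, ?IHv; reflexivity.
Qed.

Lemma depth_subst_const (t : term) (x : var) (c : nat) :
  depth (subst_term t x (tconst c)) = depth t.
Proof.
  induction t as [z| | n w args IH | G n args IH | t IH | G z u IHu v IHv];
    cbn -[fin_max].
  - destruct (Nat.eqb z x); reflexivity.
  - reflexivity.
  - do 2 f_equal; apply functional_extensionality; intro i; apply IH.
  - do 2 f_equal; apply functional_extensionality; intro i; apply IH.
  - f_equal; apply IH.
  - destruct (Nat.eqb z x); simpl; rewrite ?IHu, ?IHv; reflexivity.
Qed.

Lemma evalk_upd_subst (f : nat -> nat) (x : var) (c k : nat) (s : assignment) (t : term) :
  evalk f k (upd s x c) t = evalk f k s (subst_term t x (tconst c)).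
Proof.
  revert s t; induction k as [|k IHk]; intros s t;
    destruct t as [z| | n w args | G n args | t | G z u v]; cbn -[fin_list seq map].
  all: try (unfold upd; destruct (Nat.eqb z x); reflexivity).
  all: try reflexivity.
  - f_equal; apply functional_extensionality; intro i; apply IHk.
  - do 2 f_equal; apply functional_extensionality; intro i; apply IHk.
  - f_equal; apply IHk.
  - destruct (Nat.eqb_spec z x) as [-> | Hzx]; cbn -[fin_list seq map];
      rewrite IHk; f_equal; apply map_ext; intro i; rewrite IHk.
    + rewrite subst_term_const_absorb; reflexivity.
    + rewrite subst_term_const_comm; auto.
Qed.

Lemma eval_upd_subst (f : nat -> nat) (x : var) (c : nat) (s : assignment) (t : term) :
  eval f (upd s x c) t = eval f s (subst_term t x (tconst c)).
Proof. unfold eval; rewrite depth_subst_const; apply evalk_upd_subst. Qed.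

Lemma upd_upd_same (s : assignment) (x : var) (a b : nat) :
  upd (upd s x a) x b = upd s x b.
Proof.
  apply functional_extensionality; intro y; unfold upd; destruct (Nat.eqb y x); reflexivity.
Qed.

Lemma upd_upd_comm (s : assignment) (x z : var) (a b : nat) : z <> x ->
  upd (upd s x a) z b = upd (upd s z b) x a.
Proof.
  intro Hzx; apply functional_extensionality; intro y; unfold upd.
  destruct (Nat.eqb_spec y z), (Nat.eqb_spec y x); congruence.
Qed.

Lemma sat_upd_subst (f : nat -> nat) (x : var) (c : nat) (phi : formula) (s : assignment) :
  sat f (upd s x c) phi <-> sat f s (subst_form phi x (tconst c)).
Proof.
  revert s; induction phi as [t1 t2 | n p args | B IH | B IHB C IHC | B IHB C IHC
                              | B IHB C IHC | y B IH | y B IH]; intro s; simpl.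
  - rewrite !eval_upd_subst; reflexivity.
  - replace (fun i => eval f (upd s x c) (args i))
      with (fun i => eval f s (subst_term (args i) x (tconst c))); [reflexivity |].
    apply functional_extensionality; intro i; symmetry; apply eval_upd_subst.
  - rewrite IH; reflexivity.
  - rewrite IHB, IHC; reflexivity.
  - rewrite IHB, IHC; reflexivity.
  - rewrite IHB, IHC; reflexivity.
  - destruct (Nat.eqb_spec y x) as [-> | Hyx]; simpl.
    + setoid_rewrite upd_upd_same; reflexivity.
    + setoid_rewrite <- IH; setoid_rewrite (fun a => upd_upd_comm s x y c a Hyx);
        reflexivity.
  - destruct (Nat.eqb_spec y x) as [-> | Hyx]; simpl.
    + setoid_rewrite upd_upd_same; reflexivity.
    + setoid_rewrite <- IH; setoid_rewrite (fun a => upd_upd_comm s x y c a Hyx);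
        reflexivity.
Qed.

Theorem lemma3p7 (phi : formula) (x : var) (s : assignment) (c : nat) :
  forall f : nat -> nat,
    sat f (upd s x (eval f s (tconst c))) phi <-> sat f s (subst_form phi x (tconst c)).
Proof.
  intro f; apply sat_upd_subst.
Qed.
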